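(* Let $K$ be a valued field and $d\ge1$. Then the dual VC-dimension of $\operatorname{Conv}_{K^d}$ is exactly $d$: there are $d$ convex sets $S_1,\dots,S_d\subseteq K^d$ such that all $2^d$ sets $\bigcap_{i\in I}S_i\cap\bigcap_{i\notin I}(K^d\setminus S_i)$, $I\subseteq\{1,\dots,d\}$, are nonempty, but for no $d+1$ convex sets $S_1,\dots,S_{d+1}$ are all $2^{d+1}$ such sets nonempty.
   Context: $K$ is a field with valuation $\nu$ and valuation ring $\mathcal{O}=\{x:\nu(x)\ge0\}$. A set $X\subseteq K^d$ is convex if it is closed under combinations $\sum_{i=1}^n\alpha_ix_i$ with $x_i\in X$, $\alpha_i\in\mathcal{O}$, $\sum\alpha_i=1$; $\operatorname{Conv}_{K^d}$ is the family of all convex subsets of $K^d$. The dual VC-dimension of a family $\mathcal{F}\subseteq\mathcal{P}(X)$ is the largest $k$ such that there exist $S_1,\dots,S_k\in\mathcal{F}$ with $\bigcap_{i\in I}S_i\cap\bigcap_{i\in[k]\setminus I}(X\setminus S_i)\neq\emptyset$ for every $I\subseteq[k]$ (or $\infty$). *)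

From mathcomp Require Import all_boot all_order all_algebra.
Unset Strict Implicit. Unset Printing Implicit Defensive.
Import Order.TTheory GRing.Theory.
Local Open Scope ring_scope.

Record is_ordered_abelian_group (G : zmodType) (le : rel G) : Prop := {
  oag_refl : forall x, le x x;
  oag_anti : forall x y, le x y -> le y x -> x = y;
  oag_trans : forall x y z, le x y -> le y z -> le x z;
  oag_total : forall x y, le x y || le y x;
  oag_add : forall x y z, le x y -> le (x + z) (y + z)
}.

(* Γ ∪ {∞}, with ∞ represented by None. *)
Definition oge (G : zmodType) (le : rel G) (a b : option G) : bool :=
  match a, b with
  | None, _ => true
  | Some _, None => false
  | Some x, Some y => le y x
  end.

Definition omin (G : zmodType) (le : rel G) (a b : option G) : option G :=
  if oge G le a b then b else a.

Definition oadd (G : zmodType) (a b : option G) : option G :=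
  match a, b with
  | Some x, Some y => Some (x + y)
  | _, _ => None
  end.

Record is_valuation (K : fieldType) (G : zmodType) (le : rel G)
    (nu : K -> option G) : Prop := {
  val_inf : forall x, nu x = None <-> x = 0;
  val_mul : forall x y, nu (x * y) = oadd G (nu x) (nu y);
  val_add : forall x y, oge G le (nu (x + y)) (omin G le (nu x) (nu y))
}.

Definition in_O (K : fieldType) (G : zmodType) (le : rel G)
    (nu : K -> option G) (x : K) : Prop := oge G le (nu x) (Some 0).

Definition convex (K : fieldType) (G : zmodType) (le : rel G)
    (nu : K -> option G) (d : nat) (X : 'rV[K]_d -> Prop) : Prop :=
  forall (n : nat) (x : 'I_n -> 'rV[K]_d) (alpha : 'I_n -> K),
    (forall i, X (x i)) -> (forall i, in_O K G le nu (alpha i)) ->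
    \sum_(i < n) alpha i = 1 ->
    X (\sum_(i < n) alpha i *: x i).

Definition dual_shatters (T : Type) (F : (T -> Prop) -> Prop) (k : nat) : Prop :=
  exists S : 'I_k -> (T -> Prop),
    (forall i, F (S i)) /\
    forall I : {set 'I_k}, exists x : T,
      forall i : 'I_k, (i \in I -> S i x) /\ (i \notin I -> ~ S i x).

Definition dual_vc_dim_eq (T : Type) (F : (T -> Prop) -> Prop) (k : nat) : Prop :=
  dual_shatters T F k /\ forall m, dual_shatters T F m -> (m <= k)%N.

From mathcomp Require Import all_boot all_order all_algebra.
From Stdlib Require Import ClassicalEpsilon.

(* Lower bound: the d coordinate hyperplanes {x | x_i = 0} are convex (every
   linear subspace is), and the point with coordinates [i \notin I] lies
   exactly in the hyperplanes indexed by I.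

   Upper bound (a Radon-type argument): suppose convex S_0, ..., S_d are dually
   shattered.  Take x0 in every S_i and, for each j, a point y_j lying in every
   S_i except S_j.  The d+1 vectors y_j - x0 of K^d are linearly dependent;
   dividing a nontrivial relation by a coefficient of minimal valuation gives
   coefficients mu_j in O with mu_j0 = 1.  Then y_j0 is an O-affine combination
   of x0 and the y_j (j <> j0), which all lie in S_j0, so y_j0 lies in S_j0:
   contradiction. *)

Import GRing.Theory.
Local Open Scope ring_scope.

Arguments oag_refl {G le}. Arguments oag_anti {G le}. Arguments oag_trans {G le}.
Arguments oag_total {G le}. Arguments oag_add {G le}.
Arguments val_inf {K G le nu}. Arguments val_mul {K G le nu}.
Arguments val_add {K G le nu}.

Section ValuationConvexity.
Variables (K : fieldType) (G : zmodType) (le : rel G) (nu : K -> option G).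
Hypothesis HG : is_ordered_abelian_group G le.
Hypothesis Hv : is_valuation K G le nu.

Local Notation oge := (oge G le).
Local Notation O := (in_O K G le nu).

Lemma oge_refl a : oge a a.
Proof. by case: a => //= x; exact: oag_refl HG x. Qed.

Lemma oge_trans {a b c} : oge a b -> oge b c -> oge a c.
Proof.
case: a => [a|]; case: b => [b|]; case: c => [c|] //= hab hbc.
exact: oag_trans HG _ _ _ hbc hab.
Qed.

Lemma oge_total a b : oge a b || oge b a.
Proof. by case: a => [a|]; case: b => [b|] //=; rewrite orbC (oag_total HG). Qed.

Lemma omin_ge {a b c} : oge a c -> oge b c -> oge (omin G le a b) c.
Proof. by rewrite /omin; case: ifP. Qed.

Lemma le_addr_cancel (a b c : G) : le (a + c) (b + c) -> le a b.
Proof. by move=> /(oag_add HG _ _ (- c)); rewrite -!addrA subrr !addr0. Qed.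

Lemma double_eq0 (c : G) : c + c = 0 -> c = 0.
Proof.
move=> cc0; case/orP: (oag_total HG 0 c) => hc;
  have := oag_add HG _ _ c hc; rewrite add0r cc0 => hc'.
- exact: oag_anti HG _ _ hc' hc.
- exact: oag_anti HG _ _ hc hc'.
Qed.

Lemma nu_neq0 {x : K} : x != 0 -> exists g, nu x = Some g.
Proof.
move=> x0; case E: (nu x) => [g|]; first by exists g.
by move: x0; rewrite ((val_inf Hv x).1 E) eqxx.
Qed.

Lemma nu1 : nu 1 = Some 0.
Proof.
have [g E] := nu_neq0 (oner_neq0 K).
have := val_mul Hv 1 1; rewrite mulr1 E /= => -[/esym].
by rewrite -{3}[g]addr0 => /addrI ->.
Qed.

Lemma nuN1 : nu (-1) = Some 0.
Proof.
have [g E] : exists g, nu (-1) = Some g by apply: nu_neq0; rewrite oppr_eq0 oner_eq0.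
have := val_mul Hv (-1) (-1); rewrite mulrNN mulr1 nu1 E /=.
by case=> /esym/double_eq0 ->.
Qed.

Lemma O0 : O 0.
Proof. by rewrite /in_O ((val_inf Hv 0).2 erefl). Qed.

Lemma OD x y : O x -> O y -> O (x + y).
Proof. by move=> Ox Oy; apply: oge_trans (val_add Hv x y) (omin_ge Ox Oy). Qed.

Lemma OM x y : O x -> O y -> O (x * y).
Proof.
rewrite /in_O (val_mul Hv); case: (nu x) => [a|]; case: (nu y) => [b|] //= ha hb.
by apply: oag_trans HG _ _ _ hb _; move: (oag_add HG _ _ b ha); rewrite add0r.
Qed.

Lemma ON x : O x -> O (- x).
Proof. by move=> Ox; rewrite -mulN1r; apply: OM => //; rewrite /in_O nuN1 oge_refl. Qed.

Lemma Osum n (f : 'I_n -> K) : (forall i, O (f i)) -> O (\sum_(i < n) f i).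
Proof. by move=> Of; apply: (big_ind O) => //; [exact: O0 | exact: OD]. Qed.

Lemma O_div a b : b != 0 -> oge (nu a) (nu b) -> O (a / b).
Proof.
move=> b0; have [c Eb] := nu_neq0 b0.
rewrite -{1}(divfK b0 a) (val_mul Hv) Eb /in_O.
by case: (nu (a / b)) => [x|] //= h; apply: (@le_addr_cancel 0 x c); rewrite add0r.
Qed.

Lemma exists_min_oge (T : eqType) (f : T -> option G) (s : seq T) :
  s != [::] -> exists2 j, j \in s & forall k, k \in s -> oge (f k) (f j).
Proof.
elim: s => [|a [|b s] IH] // _.
  exists a => [|k]; first exact: mem_head.
  by rewrite mem_seq1 => /eqP ->; exact: oge_refl.
have [j js hj] := IH isT.
case/orP: (oge_total (f a) (f j)) => hja.
- exists j; first by rewrite inE js orbT.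
  by move=> k; rewrite inE => /orP [/eqP ->|/hj].
- exists a; first exact: mem_head.
  move=> k; rewrite inE => /orP [/eqP ->|/hj hkj]; first exact: oge_refl.
  exact: oge_trans hkj hja.
Qed.

Lemma normalized_dependence {d n : nat} (v : 'I_n -> 'rV[K]_d) : (d < n)%N ->
  exists j0 (mu : 'I_n -> K),
    [/\ mu j0 = 1, forall j, O (mu j) & \sum_j mu j *: v j = 0].
Proof.
move=> dn; pose A := \matrix_j v j.
have : kermx A != 0.
  by rewrite kermx_eq0 /row_free neq_ltn (leq_ltn_trans (rank_leq_col A) dn).
case/rowV0Pn => lam /sub_kermxP lamA lam0.
have rel : \sum_j lam 0 j *: v j = 0.
  by rewrite -[RHS]lamA mulmx_sum_row; apply: eq_bigr => j _; rewrite rowK.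
have [|j0 _ minj0] := exists_min_oge _ (fun j => nu (lam 0 j)) (enum 'I_n).
  by rewrite -size_eq0 size_enum_ord -lt0n (leq_ltn_trans _ dn).
have lamj0 : lam 0 j0 != 0.
  apply: contra lam0 => /eqP lamj00; apply/eqP/rowP => j; rewrite mxE.
  apply/(val_inf Hv); move: (minj0 j (mem_enum _ j)).
  by rewrite lamj00 ((val_inf Hv 0).2 erefl); case: (nu _).
exists j0, (fun j => lam 0 j / lam 0 j0); split.
- exact: divff.
- by move=> j; apply: O_div => //; apply: minj0; rewrite mem_enum.
- transitivity ((lam 0 j0)^-1 *: \sum_j lam 0 j *: v j); last by rewrite rel scaler0.
  by rewrite scaler_sumr; apply: eq_bigr => j _; rewrite scalerA mulrC.
Qed.

Lemma convex_hyperplane d (i : 'I_d) :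
  convex K G le nu d (fun x => x 0 i = 0).
Proof.
move=> n x alpha hx _ _; rewrite summxE big1 // => k _.
by rewrite mxE hx mulr0.
Qed.

(* Key step: if Σ mu_j (p_j - x0) = 0 with mu_j in O and mu_j0 = 1, then p_j0 is
   the O-affine combination (Σ mu) x0 - Σ_{j <> j0} mu_j p_j; hence a convex set
   containing x0 and all p_j (j <> j0) contains p_j0. *)
Lemma convex_dependent_point {d n} {X : 'rV[K]_d -> Prop} {x0 : 'rV[K]_d}
    {p : 'I_n -> 'rV[K]_d} {j0 : 'I_n} {mu : 'I_n -> K} :
  convex K G le nu d X -> X x0 -> (forall j, j != j0 -> X (p j)) ->
  mu j0 = 1 -> (forall j, O (mu j)) ->
  \sum_j mu j *: (p j - x0) = 0 -> X (p j0).
Proof.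
move=> convX Xx0 Xp mu1 Omu rel.
pose q j := if j == j0 then x0 else p j.
pose alpha j := if j == j0 then \sum_k mu k else - mu j.
have sum_mu_p : \sum_j mu j *: p j = (\sum_j mu j) *: x0.
  apply/eqP; rewrite -subr_eq0 scaler_suml -sumrB -[X in _ == X]rel; apply/eqP.
  by apply: eq_bigr => j _; rewrite scalerBr.
have -> : p j0 = \sum_j alpha j *: q j.
  rewrite (bigD1 j0) //= /alpha /q eqxx.
  rewrite (eq_bigr (fun j => - (mu j *: p j))) => [|j /negbTE ->]; last exact: scaleNr.
  rewrite sumrN; move: sum_mu_p; rewrite (bigD1 j0) //= mu1 scale1r => <-.
  by rewrite addrK.
apply: convX => [j|j|].
- by rewrite /q; case: eqP => [_|/eqP]; [exact: Xx0 | exact: Xp].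
- rewrite /alpha; case: eqP => _; [exact: Osum | exact: ON].
- rewrite (bigD1 j0) //= {1}/alpha eqxx.
  rewrite [X in _ + X](eq_bigr (fun j => - mu j)) => [|j jj0]; last first.
    by rewrite /alpha (negbTE jj0).
  by rewrite sumrN (bigD1 j0) //= mu1 addrK.
Qed.

Lemma convex_dual_shatters_dim d : dual_shatters _ (convex K G le nu d) d.
Proof.
exists (fun i x => x 0 i = 0); split; first exact: convex_hyperplane.
move=> I; exists (\row_k (if k \in I then 0 else 1)) => i; rewrite mxE.
by case: (i \in I); split => // _ /eqP; rewrite oner_eq0.
Qed.

Lemma convex_dual_shatters_le d m :
  dual_shatters _ (convex K G le nu d) m -> (m <= d)%N.
Proof.
case=> S [convS shatters]; rewrite leqNgt; apply/negP => dm.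
have [x0 x0S] := shatters setT.
pose avoids (j : 'I_m) (x : 'rV[K]_d) :=
  forall i, (i \in [set~ j] -> S i x) /\ (i \notin [set~ j] -> ~ S i x).
have [y yS] : exists y, forall j, avoids j (y j).
  by apply: ClassicalEpsilon.choice => j; exact: shatters.
pose w (j : 'I_d.+1) : 'I_m := widen_ord dm j.
have [j0 [mu [mu1 Omu rel]]] :=
  normalized_dependence (fun j => y (w j) - x0) (ltnSn d).
have := (yS (w j0) (w j0)).2; rewrite !inE eqxx; apply => //.
apply: (convex_dependent_point (p := fun j => y (w j)) (convS (w j0)) _ _
          mu1 Omu rel).
- by apply: (x0S _).1; rewrite inE.
- move=> j jj0; apply: (yS (w j) (w j0)).1; rewrite !inE.
  by apply: contra jj0 => /eqP/(congr1 val) /= /val_inj ->.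
Qed.

End ValuationConvexity.

Theorem theorem4p10 (K : fieldType) (G : zmodType) (le : rel G)
    (nu : K -> option G) (d : nat) :
  is_ordered_abelian_group G le -> is_valuation K G le nu -> (0 < d)%N ->
  dual_vc_dim_eq _ (convex K G le nu d) d.
Proof.
move=> HG Hv _; split; first exact: convex_dual_shatters_dim.
by move=> m; apply: convex_dual_shatters_le.
Qed.
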